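(* For every even $n\ge 6$, the honeycomb toroidal graph $\mathrm{HTG}(1,n,3)$ is even pancyclic, i.e. it contains a cycle of length $L$ for every even $L$ with $4\le L\le n$.
   Context: For $m=1$, even $n\ge 6$ and odd $\ell$ with $\ell\not\equiv\pm1\pmod n$, the honeycomb toroidal graph $\mathrm{HTG}(1,n,\ell)$ has vertex set $\{u_j: j\in\mathbb{Z}_n\}$ and edges $u_ju_{j+1}$ for all $j$ (vertical edges) and $u_ju_{j+\ell}$ for all odd $j$ (jump edges), subscripts modulo $n$. *)

From mathcomp Require Import all_boot.
From mathcomp Require Import fintype.
Set Implicit Arguments. Unset Strict Implicit. Unset Printing Implicit Defensive.

(* Honeycomb toroidal graph HTG(1,n,l): vertices u_j, j in Z_n, represented
   by 'I_n.  Edges u_j u_{j+1} (vertical) for all j, and u_j u_{j+l}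
   (jump edges) for all odd j; subscripts modulo n. *)
Definition htg_edge (n l : nat) (x y : 'I_n) : bool :=
  (nat_of_ord y == ((nat_of_ord x).+1 %% n)%N) || ((odd (nat_of_ord x)) && (nat_of_ord y == ((nat_of_ord x + l)%N %% n)%N)).

Definition htg_adj (n l : nat) : rel 'I_n :=
  fun x y => @htg_edge n l x y || @htg_edge n l y x.

Definition has_cycle_of_length (n : nat) (adj : rel 'I_n) (L : nat) : Prop :=
  exists s : seq 'I_n, [/\ size s = L, 3 <= L, uniq s & cycle adj s].
Arguments htg_edge : clear implicits.
Arguments htg_adj : clear implicits.
Arguments has_cycle_of_length : clear implicits.

From mathcomp Require Import all_boot.
From mathcomp Require Import zify.

Set Implicit Arguments.
Unset Strict Implicit.
Unset Printing Implicit Defensive.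

(* Label the vertex u_(a mod n) by the natural number a and read adjacency
   through this labelling.  A "ladder" of order k is a Hamiltonian path of
   the labels 1, ..., 2k that starts at 2k-1 and ends at 2k.  For k = 1 the
   path 1, 2 is a ladder.  A ladder of order k extends to one of order k+1
   by reversing it and adding one new vertex at each end:
        2k+1, 2k, ..., 2k-1, 2k+2,
   using the vertical edges 2k+1 ~ 2k and the jump edge 2k-1 ~ 2k+2 (2k-1
   is odd).  As the endpoints 2k-1 and 2k of a ladder are joined by a
   vertical edge, every ladder closes up into a cycle of length 2k; as long
   as 2k <= n its labels stay pairwise distinct modulo n. *)

Lemma path_rev_sym (T : Type) (e : rel T) (x y : T) (p : seq T) :
  symmetric e -> e y (last x p) -> path e x p -> path e y (rev (x :: p)).
Proof.
move=> e_sym e_y_last e_path.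
rewrite lastI rev_rcons /= e_y_last rev_path.
by rewrite (eq_path (e' := e)) // => a b; rewrite e_sym.
Qed.

Section Ladder.

Variable n' : nat.
Local Notation n := n'.+1.

Definition vtx (a : nat) : 'I_n := Ordinal (ltn_pmod a (ltn0Sn n')).

Definition adj : rel nat := relpre vtx (htg_adj n 3).

Lemma adj_sym : symmetric adj.
Proof. by move=> a b; rewrite /adj /= /htg_adj orbC. Qed.

Lemma adj_vertical (a : nat) : adj a a.+1.
Proof.
apply/orP; left; apply/orP; left; apply/eqP => /=.
by rewrite -addn1 -modnDml addn1.
Qed.

Lemma adj_jump (a : nat) : odd a -> a < n -> adj a (a + 3).
Proof.
move=> a_odd a_lt; apply/orP; left; apply/orP; right => /=.
by rewrite modn_small // a_odd eqxx.
Qed.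

Lemma vtx_inj : {in [pred a | 0 < a <= n] &, injective vtx}.
Proof.
move=> a b /andP [a_gt0 a_le] /andP [b_gt0 b_le] /(congr1 val) /= ab_mod.
have [a_eq | a_lt] := eqVneq a n; have [b_eq | b_lt] := eqVneq b n.
- by rewrite a_eq b_eq.
- by move: ab_mod; rewrite a_eq modnn modn_small; lia.
- by move: ab_mod; rewrite b_eq modnn modn_small; lia.
- by move: ab_mod; rewrite !modn_small //; lia.
Qed.

Definition ladder (k : nat) (p : seq nat) : Prop :=
  [/\ path adj k.*2.-1 p, last k.*2.-1 p = k.*2, uniq (k.*2.-1 :: p),
      all (fun a => 0 < a <= k.*2) (k.*2.-1 :: p)
    & size (k.*2.-1 :: p) = k.*2].

Lemma ladder1 : ladder 1 [:: 2].
Proof. by split; rewrite //= andbT (adj_vertical 1). Qed.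

Lemma ladder_step (k : nat) (p : seq nat) :
  0 < k -> k.*2.+2 <= n -> ladder k p ->
  ladder k.+1 (rcons (rev (k.*2.-1 :: p)) k.*2.+2).
Proof.
move=> k_gt0 k_le [p_path p_last p_uniq p_range p_size].
have fresh a : k.*2 < a -> a \notin k.*2.-1 :: p.
  by move=> a_gt; apply/negP => /(allP p_range); lia.
rewrite /ladder doubleS /=; split.
- rewrite rcons_path rev_cons last_rcons -rev_cons; apply/andP; split.
    by apply: (path_rev_sym adj_sym) => //; rewrite p_last adj_sym adj_vertical.
  have -> : k.*2.+2 = k.*2.-1 + 3 by lia.
  by apply: adj_jump; [rewrite -subn1 oddB ?odd_double; lia | lia].
- by rewrite last_rcons.
- rewrite rcons_uniq mem_rcons in_cons negb_or rev_uniq !mem_rev p_uniq !fresh //.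
  by rewrite !andbT; lia.
- rewrite all_rcons all_rev; apply/and3P; split; try lia.
  by apply/allP => a /(allP p_range); lia.
- by rewrite size_rcons size_rev p_size; lia.
Qed.

Lemma ladder_exists (k : nat) : 0 < k -> k.*2 <= n -> exists p, ladder k p.
Proof.
elim: k => [|k IHk] // _ k_le.
have [-> | k_gt0] := posnP k; first by exists [:: 2]; exact: ladder1.
have [p ladder_p] := IHk k_gt0 (ltnW (ltnW k_le)).
by exists (rcons (rev (k.*2.-1 :: p)) k.*2.+2); apply: ladder_step.
Qed.

(* The endpoints of a ladder are adjacent, so it closes up into a cycle of
   HTG(1,n,3) of length 2k. *)
Lemma ladder_cycle (k : nat) (p : seq nat) :
  1 < k -> k.*2 <= n -> ladder k p ->
  has_cycle_of_length n (htg_adj n 3) k.*2.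
Proof.
move=> k_gt1 k_le [p_path p_last p_uniq p_range p_size].
exists (map vtx (k.*2.-1 :: p)); split.
- by rewrite size_map.
- lia.
- rewrite map_inj_in_uniq // => a b /(allP p_range) a_in /(allP p_range) b_in.
  by apply: vtx_inj; rewrite inE; lia.
- rewrite cycle_map -/adj /= rcons_path p_path p_last adj_sym.
  have -> : k.*2 = (k.*2.-1).+1 by lia.
  exact: adj_vertical.
Qed.

End Ladder.

Theorem mainTheorem10 (n : nat) :
  ~~ odd n -> 6 <= n ->
  forall L : nat, ~~ odd L -> 4 <= L -> L <= n ->
    has_cycle_of_length n (htg_adj n 3) L.
Proof.
case: n => [|n'] // _ _ L L_even L_ge4 L_le.
have L_double : L = (L./2).*2 by rewrite -{1}(odd_double_half L) (negbTE L_even).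
rewrite L_double in L_ge4 L_le *.
have [p ladder_p] : exists p, ladder n' L./2 p by apply: ladder_exists; lia.
by apply: (ladder_cycle _ L_le ladder_p); lia.
Qed.
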